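(* Let $p$ be a prime, $G$ and $H$ finite $p$-groups, and for $\Gamma\in\{G,H\}$ let $N_\Gamma$ be a subgroup of $\Gamma$ containing $\Gamma'$. Let $k$ be a field of characteristic $p$ and $\phi:kG\to kH$ a ring isomorphism with $\phi(I(N_G)kG)=I(N_H)kH$. Then for every positive integer $t$, $\phi\big(I(\Omega_t(G:N_G))kG\big)=I(\Omega_t(H:N_H))kH$.
   Context: For a subgroup $N$ of $\Gamma$, $I(N)$ is the augmentation ideal of $kN$ and $I(N)k\Gamma$ the relative augmentation ideal. For a normal subgroup $N$ of $\Gamma$, $\Omega_t(\Gamma:N)=\langle g\in\Gamma: g^{p^t}\in N\rangle$, i.e.\ the subgroup containing $N$ with $\Omega_t(\Gamma:N)/N=\Omega_t(\Gamma/N)$. *)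

From HB Require Import structures.
From mathcomp Require Import all_boot all_order all_algebra all_fingroup.
From mathcomp Require Import pgroup commutator.
Set Implicit Arguments. Unset Strict Implicit. Unset Printing Implicit Defensive.
Import GRing.Theory.
Local Open Scope ring_scope.

(* Group algebra kG of the finite group G = [set: gT] over a ring k,
   realized as functions gT -> k (coefficients of the group elements). *)
Notation galg k gT := {ffun gT -> k}.

Section GroupAlgebra.
Variables (k : comNzRingType) (gT : finGroupType).

Definition gbasis (g : gT) : galg k gT := [ffun x => (x == g)%:R].

Definition gmul (a b : galg k gT) : galg k gT :=
  [ffun x => \sum_(y : gT) a y * b ((y^-1 * x)%g)].

Definition gone : galg k gT := gbasis 1%g.

(* augmentation ideal I(N) of kN, viewed inside kG: elements supported on N
   with augmentation (sum of coefficients) 0 *)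
Definition in_aug_ideal (N : {set gT}) (a : galg k gT) : Prop :=
  (forall x, x \notin N -> a x = 0) /\ \sum_(x : gT) a x = 0.

(* relative augmentation ideal I(N)kG : finite sums of products a*b with
   a in I(N) and b in kG *)
Definition in_rel_aug (N : {set gT}) (f : galg k gT) : Prop :=
  exists s : seq (galg k gT * galg k gT),
    (forall ab, ab \in s -> in_aug_ideal N ab.1) /\
    f = \sum_(ab <- s) gmul ab.1 ab.2.

End GroupAlgebra.

Definition galg_ring_iso (k : comNzRingType) (gT hT : finGroupType)
    (phi : galg k gT -> galg k hT) : Prop :=
  [/\ bijective phi,
      forall a b, phi (a + b) = phi a + phi b,
      forall a b, phi (gmul a b) = gmul (phi a) (phi b) &
      phi (gone k gT) = gone k hT].

(* phi(A) = B for subsets given as predicates *)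
Definition maps_onto (A B : Type) (phi : A -> B) (P : A -> Prop) (Q : B -> Prop)
  : Prop :=
  (forall a, P a -> Q (phi a)) /\ (forall b, Q b -> exists2 a, P a & phi a = b).

(* Omega_t(Gamma : N) = < g in Gamma : g^(p^t) in N > *)
Definition Omega_rel (gT : finGroupType) (p t : nat) (N : {set gT}) : {group gT} :=
  <<[set g : gT | (g ^+ (p ^ t))%g \in N]>>%G.

(** An element of kΓ lies in I(M)kΓ iff its coefficients sum to zero on every
   coset of M.  When Γ' ≤ N, the map kΓ → k[Γ/N] is a ring map with kernel
   I(N)kΓ onto a commutative ring of characteristic p, where the p^t-th power
   is additive: the coefficient of f^(p^t) at c ∈ Γ/N is the p^t-th power of
   the sum of f over {x | (xN)^(p^t) = c}.  These sets are the cosets of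
   Ω_t(Γ:N) and k has no nilpotents, so f ∈ I(Ω_t(Γ:N))kΓ iff
   f^(p^t) ∈ I(N)kΓ.  A ring isomorphism preserves p^t-th powers, hence
   carries the one condition to the other. *)

From HB Require Import structures.
From mathcomp Require Import all_boot all_order all_algebra all_fingroup.
From mathcomp Require Import pgroup commutator.
Set Implicit Arguments. Unset Strict Implicit. Unset Printing Implicit Defensive.
Import GRing.Theory.
Local Open Scope ring_scope.

Section GroupRing.
Variables (k : comNzRingType) (gT : finGroupType).

Lemma sum_mul_delta (F : gT -> k) u : \sum_z F z * (z == u)%:R = F u.
Proof.
rewrite (bigD1 u) //= eqxx mulr1 big1 ?addr0 // => z /negPf ->.
by rewrite mulr0.
Qed.

Lemma gmul_gbasisr (a : galg k gT) v :
  gmul a (gbasis k v) = [ffun z => a (z * v^-1)%g].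
Proof.
apply/ffunP=> z; rewrite !ffunE -(sum_mul_delta a (z * v^-1)%g).
apply: eq_bigr => y _; rewrite ffunE.
have -> : (y^-1 * z == v)%g = (y == z * v^-1)%g.
  by apply/eqP/eqP => [<- | ->]; rewrite invMg invgK ?mulKVg ?mulgKV.
by [].
Qed.

Lemma gmulA : associative (@gmul k gT).
Proof.
move=> a b c; apply/ffunP=> x; rewrite !ffunE.
under [RHS]eq_bigr do rewrite ffunE mulr_suml.
rewrite exchange_big /=; apply: eq_bigr => y _.
rewrite ffunE mulr_sumr [RHS](reindex_inj (mulgI y)) /=; apply: eq_bigr => z _.
by rewrite mulKg mulrA invMg mulgA.
Qed.

Lemma gmul1 : left_id (gone k gT) (@gmul k gT).
Proof.
move=> b; apply/ffunP=> x; rewrite ffunE (bigD1 1%g) //= big1 ?addr0.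
  by rewrite ffunE eqxx mul1r invg1 mul1g.
by move=> y /negPf; rewrite ffunE => ->; rewrite mul0r.
Qed.

Lemma gmulr1 : right_id (gone k gT) (@gmul k gT).
Proof.
by move=> a; rewrite gmul_gbasisr; apply/ffunP=> x; rewrite ffunE invg1 mulg1.
Qed.

Lemma gmulDl : left_distributive (@gmul k gT) +%R.
Proof.
move=> a b c; apply/ffunP=> x; rewrite !ffunE -big_split /=.
by apply: eq_bigr => y _; rewrite ffunE mulrDl.
Qed.

Lemma gmulDr : right_distributive (@gmul k gT) +%R.
Proof.
move=> a b c; apply/ffunP=> x; rewrite !ffunE -big_split /=.
by apply: eq_bigr => y _; rewrite ffunE mulrDr.
Qed.

Lemma gone_neq0 : gone k gT != 0.
Proof.
apply/eqP => /ffunP /(_ 1%g); rewrite !ffunE eqxx.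
by apply/eqP; rewrite oner_eq0.
Qed.

(* [{ffun gT -> k}] already carries the pointwise product; this alias carries
   the convolution product of the group ring instead. *)
Definition galg_ring := galg k gT.
HB.instance Definition _ := GRing.Zmodule.on galg_ring.
HB.instance Definition _ := GRing.Zmodule_isNzRing.Build galg_ring
  gmulA gmul1 gmulr1 gmulDl gmulDr gone_neq0.

Lemma galg_mulE (a b : galg_ring) : a * b = gmul a b. Proof. by []. Qed.
Lemma galg_oneE : (1 : galg_ring) = gone k gT. Proof. by []. Qed.

End GroupRing.

Section RelativeAugmentation.
Variables (k : comNzRingType) (gT : finGroupType) (M : {group gT}).

Lemma rcoset_sum_gmul_aug (a b : galg k gT) y : in_aug_ideal M a ->
  \sum_(x in (M :* y)%g) gmul a b x = 0.
Proof.
case=> aM a0; pose c := \sum_(w in (M :* y)%g) b w.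
under eq_bigr do rewrite ffunE.
rewrite exchange_big /= (eq_bigr (fun z => a z * c)) => [|z _].
  by rewrite -mulr_suml a0 mul0r.
rewrite -mulr_sumr.
have [zM | /aM ->] := boolP (z \in M); last by rewrite !mul0r.
congr (_ * _); rewrite (reindex_inj (mulgI z)) /=.
apply: eq_big => [w | w _]; last by rewrite mulKg.
by rewrite !mem_rcoset -mulgA groupMl.
Qed.

Lemma rel_aug_rcoset_sum (f : galg k gT) y :
  in_rel_aug M f -> \sum_(x in (M :* y)%g) f x = 0.
Proof.
case=> s [sM ->]; under eq_bigr do rewrite sum_ffunE.
rewrite exchange_big; apply: big1_seq => ab /andP[_ abs].
exact: rcoset_sum_gmul_aug (sM _ abs).
Qed.

Let r (x : gT) : gT := repr ((M :* x)%g).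

Let mem_r x : r x \in (M :* x)%g.
Proof. exact/mem_repr/rcoset_refl. Qed.

Let mem_mul_rV x : (x * (r x)^-1)%g \in M.
Proof.
by have := mem_r x; rewrite mem_rcoset => /groupVr; rewrite invMg invgK.
Qed.

Let r_eq x y : (r x == r y) = (x \in (M :* y)%g).
Proof.
apply/eqP/rcoset_eqP => [rxy | Mxy]; last by rewrite /r Mxy.
by rewrite -(rcoset_eqP (mem_r x)) rxy (rcoset_eqP (mem_r y)).
Qed.

Lemma aug_ideal_gbasisB (c : k) u : u \in M ->
  in_aug_ideal M [ffun z => c * ((z == u)%:R - (z == 1%g)%:R)].
Proof.
move=> Mu; split=> [z zM | ].
  rewrite ffunE; case: (z =P u) => [zu | _]; first by rewrite zu Mu in zM.
  case: (z =P 1%g) => [z1 | _]; last by rewrite subrr mulr0.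
  by rewrite z1 group1 in zM.
have sum_delta (v : gT) : \sum_z ((z == v)%:R : k) = 1.
  rewrite -[RHS](sum_mul_delta (fun=> 1) v).
  by apply: eq_bigr => z _; rewrite mul1r.
under eq_bigr do rewrite ffunE.
by rewrite -mulr_sumr sumrB !sum_delta subrr mulr0.
Qed.

(* The witness: [f = sum_x f(x) (x r(x)^-1 - 1) r(x) + sum_x f(x) r(x)], where
   the coefficient of the last sum at [r(y)] is the sum of [f] over [M y]. *)
Lemma rcoset_sums_rel_aug (f : galg k gT) :
  (forall y, \sum_(x in (M :* y)%g) f x = 0) -> in_rel_aug M f.
Proof.
move=> f0.
pose a x : galg k gT :=
  [ffun z => f x * ((z == x * (r x)^-1)%g%:R - (z == 1%g)%:R)].
exists [seq (a x, gbasis k (r x)) | x <- index_enum gT]; split.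
  by move=> _ /mapP[x _ ->]; apply/aug_ideal_gbasisB/mem_mul_rV.
rewrite big_map; apply/ffunP => z; rewrite sum_ffunE.
under eq_bigr => x _.
  rewrite gmul_gbasisr !ffunE (inj_eq (mulIg _)) -eq_mulgV1 mulrBr eq_sym.
  over.
rewrite /= sumrB sum_mul_delta -[LHS]subr0; congr (_ - _).
under eq_bigr do rewrite mulr_natr mulrb eq_sym.
rewrite -big_mkcond /=.
have [y /eqP <- | none] := pickP (fun x => r x == z); last by rewrite big_pred0.
by rewrite -[LHS](f0 y); apply: eq_bigl => x; rewrite r_eq.
Qed.

Lemma rel_aug_fibresP (T : eqType) (h : gT -> T) (f : galg k gT) :
    (forall x y, (h x == h y) = (x \in (M :* y)%g)) ->
  in_rel_aug M f <-> forall c, \sum_(x | h x == c) f x = 0.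
Proof.
move=> hM; split=> [fM c | f0].
  have [y /eqP <- | none] := pickP (fun x => h x == c); last first.
    by rewrite big_pred0.
  by rewrite -[RHS](rel_aug_rcoset_sum y fM); apply: eq_bigl => x; rewrite hM.
apply: rcoset_sums_rel_aug => y.
by rewrite -[RHS](f0 (h y)); apply: eq_bigl => x; rewrite hM.
Qed.

End RelativeAugmentation.

Section Frobenius.
Variables (R : nzRingType) (p : nat).
Hypotheses (pchR : p \in [pchar R]) (commR : forall x y : R, GRing.comm x y).

Lemma expr_pchar_sum (I : Type) (r : seq I) (P : pred I) (F : I -> R) :
  (\sum_(i <- r | P i) F i) ^+ p = \sum_(i <- r | P i) F i ^+ p.
Proof.
elim/big_rec2: _ => [|i y1 y2 _ <-].
  by rewrite expr0n; case: p (prime_gt0 (pcharf_prime pchR)).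
by rewrite -!(pFrobenius_autE pchR) pFrobenius_autD_comm.
Qed.

Lemma expr_pchar_pow_sum t (I : Type) (r : seq I) (P : pred I) (F : I -> R) :
  (\sum_(i <- r | P i) F i) ^+ (p ^ t) = \sum_(i <- r | P i) F i ^+ (p ^ t).
Proof.
elim: t => [|t IHt]; first by rewrite expn0.
by rewrite expnSr exprM IHt expr_pchar_sum; under eq_bigr do rewrite -exprM.
Qed.

End Frobenius.

Section Monomials.
Variables (k : comNzRingType) (gT : finGroupType).

Definition gmono (c : k) (g : gT) : galg_ring k gT :=
  [ffun x => c * (x == g)%:R].

Lemma gmonoM c d g h : gmono c g * gmono d h = gmono (c * d) (g * h)%g.
Proof.
rewrite galg_mulE; apply/ffunP => x; rewrite !ffunE (bigD1 g) //= big1 ?addr0.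
  rewrite !ffunE eqxx mulr1 mulrA; congr (_ * _%:R); congr nat_of_bool.
  by apply/eqP/eqP => [<- | ->]; rewrite ?mulKVg ?mulKg.
by move=> y /negPf; rewrite ffunE => ->; rewrite mulr0 mul0r.
Qed.

Lemma gmonoX c g n : gmono c g ^+ n = gmono (c ^+ n) (g ^+ n)%g.
Proof.
elim: n => [|n IHn]; last by rewrite exprS IHn gmonoM exprS expgS.
by apply/ffunP => x; rewrite !ffunE mul1r.
Qed.

Lemma galg_gmono_decomp (f : galg_ring k gT) : f = \sum_g gmono (f g) g.
Proof.
apply/ffunP => x; rewrite sum_ffunE; under eq_bigr do rewrite ffunE.
by rewrite -(sum_mul_delta f x); apply: eq_bigr => g _; rewrite eq_sym.
Qed.

Lemma galg_pchar p : p \in [pchar k] -> p \in [pchar galg_ring k gT].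
Proof.
move=> pchk; apply/andP; split; first exact: pcharf_prime pchk.
by apply/eqP/ffunP => x; rewrite ffunMnE !ffunE (mulrn_pchar pchk).
Qed.

End Monomials.

Section AbelianGroupRing.
Variables (k : comNzRingType) (Q : finGroupType) (p : nat).
Hypotheses (pchk : p \in [pchar k]) (commQ : forall x y : Q, commute x y).

Lemma galg_comm (a b : galg_ring k Q) : GRing.comm a b.
Proof.
rewrite /GRing.comm !galg_mulE; apply/ffunP => x; rewrite !ffunE.
rewrite (reindex_inj (h := fun w => x * w^-1)%g); last first.
  by move=> u v /mulgI /invg_inj.
apply: eq_bigr => w _ /=.
by rewrite mulrC invMg invgK mulgKV commQ.
Qed.

Lemma galg_expr_pchar_pow (f : galg_ring k Q) t :
  f ^+ (p ^ t) = [ffun c => \sum_(g | (g ^+ (p ^ t))%g == c) f g ^+ (p ^ t)].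
Proof.
rewrite {1}(galg_gmono_decomp f).
rewrite (expr_pchar_pow_sum (galg_pchar _ pchk) galg_comm).
apply/ffunP => c; rewrite sum_ffunE ffunE [RHS]big_mkcond /=.
apply: eq_bigr => g _; rewrite gmonoX ffunE eq_sym.
by case: eqP; rewrite ?mulr1 ?mulr0.
Qed.

End AbelianGroupRing.

Section QuotientMap.
Variables (k : comNzRingType) (gT : finGroupType) (N : {group gT}).
Hypothesis nsN : (N <| [set: gT])%g.

Let nN x : x \in 'N(N)%g.
Proof. by rewrite (subsetP (normal_norm nsN)) ?inE. Qed.

Lemma eq_coset x y : (coset N x == coset N y) = (x \in (N :* y)%g).
Proof. exact/eqP/(rcoset_kercosetP (nN x) (nN y)). Qed.

Definition galg_quo (f : galg k gT) : galg_ring k (coset_of N) :=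
  [ffun C => \sum_(x | coset N x == C) f x].

Lemma sum_galg_quo (P : pred (coset_of N)) (f : galg k gT) :
  \sum_(C | P C) galg_quo f C = \sum_(x | P (coset N x)) f x.
Proof.
rewrite [RHS](partition_big (coset N) P) //=.
apply: eq_bigr => C PC; rewrite ffunE; apply: eq_bigl => x.
by case: eqP => [-> | _]; rewrite ?PC ?andbF.
Qed.

Lemma galg_quoM (a b : galg_ring k gT) :
  galg_quo (a * b) = galg_quo a * galg_quo b.
Proof.
apply/ffunP => C; rewrite !galg_mulE !ffunE.
under eq_bigr do rewrite ffunE.
rewrite exchange_big /=.
under [RHS]eq_bigr do rewrite ffunE mulr_suml.
rewrite [LHS](partition_big (coset N) xpredT) //=.
apply: eq_bigr => D _; apply: eq_bigr => y /eqP <-.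
rewrite ffunE -mulr_sumr (reindex_inj (mulgI y)) /=.
congr (_ * _); apply: eq_big => [z | z _]; last by rewrite mulKg.
by rewrite morphM ?nN // -(inj_eq (mulgI (coset N y)^-1)%g) mulKg.
Qed.

Lemma galg_quo1 : galg_quo (1 : galg_ring k gT) = 1.
Proof.
apply/ffunP => C; rewrite !galg_oneE !ffunE.
under eq_bigr do rewrite ffunE.
rewrite big_mkcond (bigD1 1%g) //= big1 ?addr0 => [|x /negPf ->].
  by rewrite eqxx morph1 eq_sym; case: ifP.
by case: ifP.
Qed.

Lemma galg_quoX (f : galg_ring k gT) n : galg_quo (f ^+ n) = galg_quo f ^+ n.
Proof.
elim: n => [|n IHn]; first by rewrite !expr0 galg_quo1.
by rewrite !exprS galg_quoM IHn.
Qed.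

Lemma rel_aug_galg_quo0 (f : galg k gT) : in_rel_aug N f <-> galg_quo f = 0.
Proof.
apply: iff_trans (rel_aug_fibresP _ eq_coset) _.
split=> [f0 | /ffunP f0 C]; first by apply/ffunP => C; rewrite !ffunE f0.
by have := f0 C; rewrite !ffunE.
Qed.

End QuotientMap.

Section OmegaRel.
Variables (gT : finGroupType) (N : {group gT}) (p t : nat).
Hypothesis sGN : ([set: gT]^`(1) \subset N)%g.

Let nsN : (N <| [set: gT])%g := sub_der1_normal sGN (subsetT N).
Let nN x : x \in 'N(N)%g.
Proof. by rewrite (subsetP (normal_norm nsN)) ?inE. Qed.

Lemma coset_der1_commute (C D : coset_of N) : commute C D.
Proof.
have: abelian [set: coset_of N] by rewrite -quotientT sub_der1_abelian.
by move/centsP/(_ C (in_setT C) D (in_setT D)).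
Qed.

Lemma mem_Omega_rel x : (x \in Omega_rel p t N) = (coset N x ^+ (p ^ t) == 1)%g.
Proof.
have memNE y : ((y ^+ (p ^ t))%g \in N) = (coset N y ^+ (p ^ t) == 1)%g.
  rewrite -morphX ?nN // -(morph1 (coset N)) eq_coset //.
  by rewrite mem_rcoset invg1 mulg1.
have gs : group_set [set g : gT | (g ^+ (p ^ t))%g \in N].
  apply/group_setP; split=> [|g h]; rewrite !inE ?memNE ?morph1 ?expg1n //.
  move=> /eqP eg /eqP eh; rewrite morphM ?nN // expgMn ?eg ?eh ?mulg1 //.
  exact: coset_der1_commute.
by rewrite /Omega_rel /= gen_set_id // inE memNE.
Qed.

Lemma eq_coset_expg x y :
  (coset N x ^+ (p ^ t) == coset N y ^+ (p ^ t))%g =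
  (x \in (Omega_rel p t N :* y)%g).
Proof.
rewrite mem_rcoset mem_Omega_rel morphM ?nN // morphV ?nN //.
by rewrite expgMn ?expVgn -?eq_mulgV1 //; apply: coset_der1_commute.
Qed.

End OmegaRel.

Lemma rel_aug_Omega_relP (k : idomainType) (gT : finGroupType)
    (N : {group gT}) (p t : nat) (f : galg_ring k gT) :
  p \in [pchar k] -> ([set: gT]^`(1) \subset N)%g ->
  in_rel_aug (Omega_rel p t N) f <-> in_rel_aug N (f ^+ (p ^ t)).
Proof.
move=> pchk sGN; have nsN := sub_der1_normal sGN (subsetT N).
have q_gt0 : (0 < p ^ t)%N by rewrite expn_gt0 prime_gt0 // (pcharf_prime pchk).
apply: iff_trans (rel_aug_fibresP _ (eq_coset_expg p t sGN)) _.
apply: iff_sym; apply: iff_trans (rel_aug_galg_quo0 nsN _) _.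
rewrite galg_quoX //.
have -> : galg_quo N f ^+ (p ^ t) = _ :=
  galg_expr_pchar_pow pchk (coset_der1_commute sGN) (galg_quo N f) t.
have fibreE c :
    (\sum_(C | (C ^+ (p ^ t) == c)%g) galg_quo N f C ^+ (p ^ t) == 0) =
    (\sum_(x | (coset N x ^+ (p ^ t) == c)%g) f x == 0).
  rewrite -(expr_pchar_pow_sum pchk) ?expf_eq0 ?q_gt0 ?sum_galg_quo //.
  exact: mulrC.
split=> [/ffunP f0 c | f0].
  by apply/eqP; rewrite -fibreE; have := f0 c; rewrite !ffunE => ->.
by apply/ffunP => c; rewrite !ffunE; apply/eqP; rewrite fibreE f0.
Qed.

Lemma maps_onto_preim (A B : Type) (phi : A -> B) (fA : A -> A) (fB : B -> B)
    (P P' : A -> Prop) (Q Q' : B -> Prop) :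
    bijective phi -> (forall a, phi (fA a) = fB (phi a)) ->
    (forall a, P' a <-> P (fA a)) -> (forall b, Q' b <-> Q (fB b)) ->
  maps_onto phi P Q -> maps_onto phi P' Q'.
Proof.
move=> [psi phiK psiK] phiF P'E Q'E [PQ QP].
split=> [a /P'E /PQ | b /Q'E /QP [a Pa e]]; first by rewrite phiF => /Q'E.
exists (psi b) => //; apply/P'E.
suff -> : fA (psi b) = a by [].
by apply: (can_inj phiK); rewrite phiF psiK e.
Qed.

Lemma galg_ring_isoX (k : comNzRingType) (gT hT : finGroupType)
    (phi : galg k gT -> galg k hT) (n : nat) :
  galg_ring_iso phi ->
  forall f : galg_ring k gT, phi (f ^+ n) = (phi f : galg_ring k hT) ^+ n.
Proof.
case=> _ _ phiM phi1 f; elim: n => [|n IHn]; first by rewrite !expr0 !galg_oneE.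
by rewrite !exprS galg_mulE phiM IHn.
Qed.

Theorem lemma2p6 (p : nat) (gT hT : finGroupType)
    (NG : {group gT}) (NH : {group hT})
    (k : fieldType) (phi : galg k gT -> galg k hT) :
  prime p ->
  (p.-group [set: gT])%g -> (p.-group [set: hT])%g ->
  ([set: gT]^`(1) \subset NG)%g -> ([set: hT]^`(1) \subset NH)%g ->
  p \in [pchar k] ->
  galg_ring_iso phi ->
  maps_onto phi (in_rel_aug NG) (in_rel_aug NH) ->
  forall t : nat, (0 < t)%N ->
    maps_onto phi (in_rel_aug (Omega_rel p t NG)) (in_rel_aug (Omega_rel p t NH)).
Proof.
move=> _ _ _ sGN sHN pchk iso_phi onto_phi t _.
have [bij_phi _ _ _] := iso_phi.
by apply: maps_onto_preim bij_phi (galg_ring_isoX (p ^ t) iso_phi) _ _ onto_phi;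
  move=> f; apply: rel_aug_Omega_relP.
Qed.
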